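(* For every bijection $\phi:\mathbb N\to\mathbb N$, the map $\phi_*:(\mathrm{Conf}^{lf}_\infty(\mathbb C),d_{\Sigma})\to(\mathrm{Conf}^{lf}_\infty(\mathbb C),d_{\Sigma})$, $\phi_*((a_j)_{j\ge1})=(a_{\phi(j)})_{j\ge1}$, is continuous and in fact a homeomorphism.
   Context: $\mathrm{Conf}^{lf}_\infty(\mathbb C)$ is the set of sequences $x=(x_j)_{j\in\mathbb N}\in\mathbb C^{\mathbb N}$ with $x_i\ne x_j$ for $i\neq j$ and such that for every $R>0$ the set $\{j:|x_j|\le R\}$ is finite. $P(x)=\{x_j:j\in\mathbb N\}$, which lies in $C^{lf}_\infty(\mathbb C)$, the set of countably infinite locally finite subsets of $\mathbb C$. Let $d_{\mathrm{prod}}(x,y)=\sum_j 2^{-j}\min\{|x_j-y_j|,1\}$, and $d_{\Sigma}(x,y)=d_{\mathrm{prod}}(x,y)+d_{\mathcal V}(P(x),P(y))$, where $d_{\mathcal V}$ is the vague metric: for a fixed sequence $(\varphi_j)\subset C_c(\mathbb C)$ such that for each $m$ the $\varphi_j$ supported in $\{|z|\le m\}$ are sup-norm dense among compactly supported continuous real functions supported in $\{|z|\le m\}$, $d_{\mathcal V}(A,B)=\sum_j 2^{-j}\frac{|\sum_{a\in A}\varphi_j(a)-\sum_{b\in B}\varphi_j(b)|}{1+|\sum_{a\in A}\varphi_j(a)-\sum_{b\in B}\varphi_j(b)|}$. *)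

From Stdlib Require Import Reals.
From Coquelicot Require Import Coquelicot.
Open Scope R_scope.

(* Indexing convention: the paper's index set N = {1,2,3,...}; we use Rocq's
   nat = {0,1,2,...} with the shift j <-> j+1, so a sequence x : nat -> C has
   x k = x_{k+1}, and the weight 2^{-j} becomes (1/2)^(k+1). *)

Definition Conf (x : nat -> C) : Prop :=
  (forall i j : nat, i <> j -> x i <> x j) /\
  (forall R : R, 0 < R -> exists N : nat, forall j : nat, Cmod (x j) <= R -> (j < N)%nat).

Definition d_prod (x y : nat -> C) : R :=
  Series (fun j => (1/2) ^ (S j) * Rmin (Cmod (Cminus (x j) (y j))) 1).

(* sum_{a in P(x)} f(a); for x injective this is the sum over indices,
   which has only finitely many nonzero terms when f has compact support
   and x is locally finite. *)
Definition config_sum (f : C -> R) (x : nat -> C) : R :=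
  Series (fun k => f (x k)).

Definition d_V (phi : nat -> C -> R) (x y : nat -> C) : R :=
  Series (fun j =>
    (1/2) ^ (S j) *
    (Rabs (config_sum (phi j) x - config_sum (phi j) y) /
     (1 + Rabs (config_sum (phi j) x - config_sum (phi j) y)))).

Definition d_Sigma (phi : nat -> C -> R) (x y : nat -> C) : R :=
  d_prod x y + d_V phi x y.

Definition supported_in (f : C -> R) (m : R) : Prop :=
  forall z : C, m < Cmod z -> f z = 0.

Definition continuous_fun (f : C -> R) : Prop :=
  forall z : C, continuous f z.

Definition vague_test_seq (phi : nat -> C -> R) : Prop :=
  (forall j, continuous_fun (phi j) /\ exists m : R, supported_in (phi j) m) /\
  (forall m : nat, forall f : C -> R,
     continuous_fun f -> supported_in f (INR m) ->
     forall eps : R, 0 < eps ->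
     exists j : nat, supported_in (phi j) (INR m) /\
       forall z : C, Rabs (f z - phi j z) < eps).

Definition bijection (s : nat -> nat) : Prop :=
  (forall n m, s n = s m -> n = m) /\ (forall m, exists n, s n = m).

Definition reindex (s : nat -> nat) (x : nat -> C) : nat -> C :=
  fun j => x (s j).

Definition continuous_on_Conf (d : (nat -> C) -> (nat -> C) -> R)
  (F : (nat -> C) -> (nat -> C)) : Prop :=
  forall x, Conf x -> forall eps, 0 < eps -> exists delta, 0 < delta /\
    forall y, Conf y -> d x y < delta -> d (F x) (F y) < eps.

Definition homeomorphism_on_Conf (d : (nat -> C) -> (nat -> C) -> R)
  (F : (nat -> C) -> (nat -> C)) : Prop :=
  (forall x, Conf x -> Conf (F x)) /\
  continuous_on_Conf d F /\
  exists G : (nat -> C) -> (nat -> C),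
    (forall x, Conf x -> Conf (G x)) /\
    (forall x, Conf x -> G (F x) = x) /\
    (forall x, Conf x -> F (G x) = x) /\
    continuous_on_Conf d G.

From Stdlib Require Import Reals.
From Coquelicot Require Import Coquelicot.
From Stdlib Require Import Lra Lia FunctionalExtensionality IndefiniteDescription.
Open Scope R_scope.

(* Reindexing by a bijection only permutes the points of a configuration, so
   it does not change P(x) and hence preserves d_V exactly.  For d_prod, the
   first N terms of the reindexed series are each at most 2^(s(j)+1) d_prod(x,y),
   while its tail beyond N is at most 2^-N; so d_prod of the images is small
   when d_prod(x,y) is.  The inverse map is reindexing by the inverse
   bijection, which is continuous for the same reason. *)

Lemma is_series_0 : is_series (fun _ : nat => 0) 0.
Proof.
  pose proof (is_series_scal_l 0 _ _ (is_series_geom (1/2) ltac:(rewrite Rabs_pos_eq; lra))) as H.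
  apply (is_series_ext _ _ _ (fun n => Rmult_0_l _)) in H.
  change (scal 0 (/ (1 - 1/2))) with (0 * / (1 - 1/2)) in H.
  rewrite Rmult_0_l in H. exact H.
Qed.

Lemma Series_finite_support (g : nat -> R) (N : nat) :
  (forall k, (k > N)%nat -> g k = 0) -> Series g = sum_f_R0 g N.
Proof.
  intros Hg.
  assert (Htail : is_series (fun n => g (S N + n)%nat) 0).
  { apply (is_series_ext (fun _ => 0)); [intros n; symmetry; apply Hg; lia|].
    exact is_series_0. }
  rewrite (Series_incr_n g (S N)); [| lia | apply (ex_series_incr_n g (S N)); eexists; exact Htail].
  rewrite (is_series_unique _ _ Htail). simpl. lra.
Qed.

Lemma is_series_half_pow_tail (N : nat) :
  is_series (fun k => (1/2) ^ S (N + k)) ((1/2) ^ N).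
Proof.
  pose proof (is_series_scal_l ((1/2) ^ S N) _ _
                (is_series_geom (1/2) ltac:(rewrite Rabs_pos_eq; lra))) as H.
  change (scal ((1/2) ^ S N) (/ (1 - 1/2))) with ((1/2) ^ S N * / (1 - 1/2)) in H.
  replace ((1/2) ^ S N * / (1 - 1/2)) with ((1/2) ^ N) in H by (simpl; field).
  apply (is_series_ext _ _ _ (fun n => eq_sym (pow_add (1/2) (S N) n))) in H.
  exact H.
Qed.

Lemma half_pow_bounds (n : nat) : 0 < (1/2) ^ n <= 1.
Proof. induction n; simpl; [lra|]. split; [apply Rmult_lt_0_compat|]; lra. Qed.

Lemma sum_f_R0_pos (u : nat -> R) (N : nat) : (forall j, 0 < u j) -> 0 < sum_f_R0 u N.
Proof. intros Hu; induction N; simpl; [apply Hu | pose proof (Hu (S N)); lra]. Qed.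

Section WeightedSeries.
Variable a : nat -> R.
Hypothesis a_bounds : forall j, 0 <= a j <= (1/2) ^ S j.

Lemma ex_series_weighted : ex_series a.
Proof.
  apply (ex_series_le a (fun j => (1/2) ^ S j)).
  - intros n. change (norm (a n)) with (Rabs (a n)). rewrite Rabs_pos_eq; apply a_bounds.
  - exists ((1/2) ^ 0). exact (is_series_half_pow_tail 0).
Qed.

Lemma Series_weighted_tail_ge0 (n : nat) : 0 <= Series (fun k => a (n + k)%nat).
Proof.
  rewrite <- (is_series_unique _ _ is_series_0).
  apply Series_le; [intros; split; [lra | apply a_bounds]|].
  apply (ex_series_incr_n a n), ex_series_weighted.
Qed.

Lemma Series_weighted_ge0 : 0 <= Series a.
Proof. exact (Series_weighted_tail_ge0 0). Qed.

Lemma partial_sum_weighted_ge0 (N : nat) : 0 <= sum_f_R0 a N.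
Proof. induction N; simpl; [apply a_bounds | pose proof (a_bounds (S N)); lra]. Qed.

Lemma weighted_term_le_Series (k : nat) : a k <= Series a.
Proof.
  rewrite (Series_incr_n a (S k)); [| lia | apply ex_series_weighted].
  pose proof (Series_weighted_tail_ge0 (S k)).
  assert (a k <= sum_f_R0 a k).
  { destruct k; simpl; [lra|]. pose proof (partial_sum_weighted_ge0 k). lra. }
  simpl pred. lra.
Qed.

Lemma Series_weighted_le_partial (N : nat) :
  Series a <= sum_f_R0 a N + (1/2) ^ S N.
Proof.
  rewrite (Series_incr_n a (S N)); [| lia | apply ex_series_weighted].
  simpl pred. apply Rplus_le_compat_l.
  rewrite <- (is_series_unique _ _ (is_series_half_pow_tail (S N))).
  apply Series_le; [intros n; apply a_bounds | eexists; apply is_series_half_pow_tail].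
Qed.
End WeightedSeries.

Lemma d_prod_term_bounds (x y : nat -> C) (j : nat) :
  0 <= (1/2) ^ S j * Rmin (Cmod (Cminus (x j) (y j))) 1 <= (1/2) ^ S j.
Proof.
  pose proof (half_pow_bounds (S j)). pose proof (Cmod_ge_0 (Cminus (x j) (y j))).
  pose proof (Rmin_r (Cmod (Cminus (x j) (y j))) 1).
  assert (0 <= Rmin (Cmod (Cminus (x j) (y j))) 1) by (apply Rmin_glb; lra).
  split; nra.
Qed.

Lemma d_V_term_bounds (u v : R) (j : nat) :
  0 <= (1/2) ^ S j * (Rabs (u - v) / (1 + Rabs (u - v))) <= (1/2) ^ S j.
Proof.
  pose proof (half_pow_bounds (S j)). pose proof (Rabs_pos (u - v)).
  assert (0 <= Rabs (u - v) / (1 + Rabs (u - v)) <= 1).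
  { split; [apply Rdiv_le_0_compat; lra|].
    apply (Rmult_le_reg_r (1 + Rabs (u - v))); [lra|].
    unfold Rdiv. rewrite Rmult_assoc, Rinv_l by lra. lra. }
  split; nra.
Qed.

Lemma d_prod_ge0 x y : 0 <= d_prod x y.
Proof. apply Series_weighted_ge0. intros; apply d_prod_term_bounds. Qed.

Lemma d_V_ge0 phi x y : 0 <= d_V phi x y.
Proof. apply Series_weighted_ge0. intros; apply d_V_term_bounds. Qed.

Lemma Rmin_dist_le_d_prod (x y : nat -> C) (k : nat) :
  Rmin (Cmod (Cminus (x k) (y k))) 1 <= 2 ^ S k * d_prod x y.
Proof.
  pose proof (weighted_term_le_Series _ (d_prod_term_bounds x y) k) as Hk.
  fold (d_prod x y) in Hk.
  assert (H2 : 2 ^ S k * (1/2) ^ S k = 1).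
  { rewrite <- Rpow_mult_distr. replace (2 * (1/2)) with 1 by field. apply pow1. }
  assert (0 < 2 ^ S k) by (apply pow_lt; lra).
  apply (Rmult_le_compat_l (2 ^ S k)) in Hk; [|lra].
  cbv beta in Hk. rewrite <- Rmult_assoc, H2, Rmult_1_l in Hk. exact Hk.
Qed.

Lemma sum_f_R0_single (u : nat -> R) (j0 : nat) :
  (forall j, j <> j0 -> u j = 0) ->
  forall M, sum_f_R0 u M = if Nat.leb j0 M then u j0 else 0.
Proof.
  intros Hu M. induction M as [|M IH].
  - destruct j0; simpl; [reflexivity | apply Hu; lia].
  - rewrite tech5, IH. destruct (Nat.eq_dec j0 (S M)) as [->|ne].
    + destruct (Nat.leb_spec (S M) M), (Nat.leb_spec (S M) (S M)); try lia; lra.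
    + rewrite (Hu (S M)) by lia.
      destruct (Nat.leb_spec j0 M), (Nat.leb_spec j0 (S M)); try lia; lra.
Qed.

Section Bijection.
Variable s : nat -> nat.
Hypothesis s_inj : forall n m, s n = s m -> n = m.
Hypothesis s_surj : forall m, exists n, s n = m.

Lemma sum_f_R0_comp_single (h : nat -> R) (t M : nat) :
  (forall k, k <> t -> h k = 0) ->
  (forall j, (j > M)%nat -> h (s j) = 0) ->
  sum_f_R0 (fun j => h (s j)) M = h t.
Proof.
  intros Ht HM. destruct (s_surj t) as [j0 <-].
  rewrite (sum_f_R0_single _ j0).
  - destruct (Nat.leb_spec j0 M); [reflexivity|]. symmetry; apply HM; lia.
  - intros j ne. apply Ht. intros e. apply ne, s_inj, e.
Qed.

(* Peel off the top value h (S N): as s is a bijection, it occurs exactly once on the left. *)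
Lemma sum_f_R0_comp_bij (N : nat) : forall (h : nat -> R) (M : nat),
  (forall k, (k > N)%nat -> h k = 0) ->
  (forall j, (j > M)%nat -> h (s j) = 0) ->
  sum_f_R0 (fun j => h (s j)) M = sum_f_R0 h N.
Proof.
  induction N as [|N IH]; intros h M Hh HM.
  - simpl. apply sum_f_R0_comp_single; [intros k ne; apply Hh; lia | exact HM].
  - set (h0 := fun k => if Nat.eq_dec k (S N) then 0 else h k).
    set (h1 := fun k => if Nat.eq_dec k (S N) then h k else 0).
    assert (Hsplit : forall k, h k = h0 k + h1 k).
    { intros k; unfold h0, h1; destruct (Nat.eq_dec k (S N)); lra. }
    rewrite (sum_eq _ (fun j => h0 (s j) + h1 (s j))) by (intros; apply Hsplit).
    rewrite sum_plus, tech5.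
    rewrite (IH h0 M), (sum_f_R0_comp_single h1 (S N)).
    + unfold h1. destruct (Nat.eq_dec (S N) (S N)); [|lia].
      f_equal. apply sum_eq. intros i Hi. unfold h0.
      destruct (Nat.eq_dec i (S N)); [lia | reflexivity].
    + intros k ne; unfold h1; destruct (Nat.eq_dec k (S N)); [lia | reflexivity].
    + intros j Hj; unfold h1; destruct (Nat.eq_dec (s j) (S N)); [apply HM|]; auto.
    + intros k Hk; unfold h0; destruct (Nat.eq_dec k (S N)); [|apply Hh; lia]; auto.
    + intros j Hj; unfold h0; destruct (Nat.eq_dec (s j) (S N)); [|apply HM]; auto.
Qed.

Lemma bij_preimage_bounded (N : nat) :
  exists N', forall j, (s j < N)%nat -> (j < N')%nat.
Proof.
  induction N as [|N [N' HN']]; [exists 0%nat; intros; lia|].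
  destruct (s_surj N) as [j0 Hj0].
  exists (Nat.max N' (S j0)). intros j Hj.
  destruct (Nat.eq_dec (s j) N) as [e|ne].
  - assert (j = j0) by (apply s_inj; congruence). lia.
  - specialize (HN' j ltac:(lia)). lia.
Qed.
End Bijection.

Lemma bijection_inverse (s : nat -> nat) :
  bijection s ->
  exists t, bijection t /\ (forall m, s (t m) = m) /\ (forall n, t (s n) = n).
Proof.
  intros [s_inj s_surj].
  exists (fun m => proj1_sig (constructive_indefinite_description _ (s_surj m))).
  set (t := fun m => _).
  assert (Hst : forall m, s (t m) = m).
  { intros m; unfold t; destruct (constructive_indefinite_description _ _); auto. }
  assert (Hts : forall n, t (s n) = n) by (intros n; apply s_inj, Hst).
  repeat split; auto.
  - intros n m e. rewrite <- (Hst n), <- (Hst m), e. reflexivity.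
  - intros m. exists (s m). apply Hts.
Qed.

Lemma Conf_reindex (s : nat -> nat) (x : nat -> C) :
  bijection s -> Conf x -> Conf (reindex s x).
Proof.
  intros [s_inj s_surj] [Hinj Hlf]. split.
  - intros i j ne. apply Hinj. intros e; apply ne, s_inj, e.
  - intros r Hr. destruct (Hlf r Hr) as [N HN].
    destruct (bij_preimage_bounded s s_inj s_surj N) as [N' HN'].
    exists N'. intros j Hj. apply HN', HN, Hj.
Qed.

Lemma Conf_supported_eventually_0 (f : C -> R) (x : nat -> C) :
  Conf x -> (exists m, supported_in f m) ->
  exists N, forall k, (k > N)%nat -> f (x k) = 0.
Proof.
  intros [_ Hlf] [m Hm]. pose proof (Rmax_l m 1). pose proof (Rmax_r m 1).
  destruct (Hlf (Rmax m 1)) as [N HN]; [lra|].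
  exists N. intros k Hk. apply Hm.
  destruct (Rle_or_lt (Cmod (x k)) (Rmax m 1)) as [Hle|Hgt]; [specialize (HN k Hle); lia | lra].
Qed.

Lemma config_sum_reindex (s : nat -> nat) (f : C -> R) (x : nat -> C) :
  bijection s -> Conf x -> (exists m, supported_in f m) ->
  config_sum f (reindex s x) = config_sum f x.
Proof.
  intros Hs Hx Hf.
  destruct (Conf_supported_eventually_0 f x Hx Hf) as [N HN].
  destruct (Conf_supported_eventually_0 f _ (Conf_reindex s x Hs Hx) Hf) as [M HM].
  unfold config_sum. rewrite (Series_finite_support _ N HN), (Series_finite_support _ M HM).
  destruct Hs as [s_inj s_surj].
  exact (sum_f_R0_comp_bij s s_inj s_surj N (fun k => f (x k)) M HN HM).
Qed.

Lemma d_V_reindex phi s x y :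
  vague_test_seq phi -> bijection s -> Conf x -> Conf y ->
  d_V phi (reindex s x) (reindex s y) = d_V phi x y.
Proof.
  intros [Hphi _] Hs Hx Hy. unfold d_V. apply Series_ext. intros j.
  rewrite !(config_sum_reindex s) by (auto; apply Hphi). reflexivity.
Qed.

Lemma d_prod_reindex_le (s : nat -> nat) (x y : nat -> C) (N : nat) :
  d_prod (reindex s x) (reindex s y)
  <= d_prod x y * sum_f_R0 (fun j => 2 ^ S (s j)) N + (1/2) ^ N.
Proof.
  eapply Rle_trans; [apply (Series_weighted_le_partial _ (d_prod_term_bounds _ _) N)|].
  assert ((1/2) ^ S N <= (1/2) ^ N) by (pose proof (half_pow_bounds N); simpl; lra).
  apply Rplus_le_compat; [|exact H].
  rewrite scal_sum. apply sum_Rle. intros j _. unfold reindex.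
  pose proof (d_prod_term_bounds x y (s j)). pose proof (half_pow_bounds (S j)).
  pose proof (Rmin_dist_le_d_prod x y (s j)).
  pose proof (Rmin_r (Cmod (Cminus (x (s j)) (y (s j)))) 1).
  assert (0 <= Rmin (Cmod (Cminus (x (s j)) (y (s j)))) 1)
    by (apply Rmin_glb; [apply Cmod_ge_0 | lra]).
  nra.
Qed.

Lemma continuous_reindex phi s :
  vague_test_seq phi -> bijection s -> continuous_on_Conf (d_Sigma phi) (reindex s).
Proof.
  intros Hphi Hs x Hx eps Heps.
  destruct (pow_lt_1_zero (1/2) ltac:(rewrite Rabs_pos_eq; lra) (eps/4) ltac:(lra)) as [N HN].
  specialize (HN N (le_n N)). rewrite Rabs_pos_eq in HN by (pose proof (half_pow_bounds N); lra).
  set (K := sum_f_R0 (fun j => 2 ^ S (s j)) N).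
  assert (HK : 0 < K) by (apply sum_f_R0_pos; intros; apply pow_lt; lra).
  exists (Rmin (eps/2) (eps/(4*K))). split.
  { apply Rmin_glb_lt; [lra | apply Rdiv_lt_0_compat; lra]. }
  intros y Hy Hd. unfold d_Sigma in *.
  rewrite (d_V_reindex phi s x y Hphi Hs Hx Hy).
  pose proof (d_prod_ge0 x y). pose proof (d_V_ge0 phi x y).
  pose proof (Rmin_l (eps/2) (eps/(4*K))). pose proof (Rmin_r (eps/2) (eps/(4*K))).
  pose proof (d_prod_reindex_le s x y N) as Hle. fold K in Hle.
  assert (d_prod x y * K < eps/4).
  { replace (eps/4) with (eps/(4*K) * K) by (field; lra).
    apply Rmult_lt_compat_r; lra. }
  lra.
Qed.

Theorem mainTheorem3 (phi : nat -> C -> R) (s : nat -> nat) :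
  vague_test_seq phi -> bijection s ->
  continuous_on_Conf (d_Sigma phi) (reindex s) /\
  homeomorphism_on_Conf (d_Sigma phi) (reindex s).
Proof.
  intros Hphi Hs.
  pose proof (continuous_reindex phi s Hphi Hs) as Hcont.
  destruct (bijection_inverse s Hs) as (t & Ht & Hst & Hts).
  split; [exact Hcont|]. split; [intros; apply Conf_reindex; auto|]. split; [exact Hcont|].
  exists (reindex t). split; [|split; [|split]].
  - intros; apply Conf_reindex; auto.
  - intros x _. extensionality j. unfold reindex. rewrite Hst. reflexivity.
  - intros x _. extensionality j. unfold reindex. rewrite Hts. reflexivity.
  - apply continuous_reindex; auto.
Qed.
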